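(* Let $F$ be an imaginary CM field. Let $\rho:G_F\to\operatorname{GL}_n(\overline{\mathbb{Q}}_\ell)$ and $\sigma:G_F\to\operatorname{GL}_m(\overline{\mathbb{Q}}_\ell)$ be polarizable, irreducible Galois representations. (1) If $n$ is odd, then $\rho$ is totally odd. (2) If $\rho\otimes\sigma$ is irreducible and two of $\{\rho,\sigma,\rho\otimes\sigma\}$ are totally odd, then all three are totally odd.
   Context: $F$ is a totally imaginary quadratic extension of a totally real field $F^+$, and $\delta_{F/F^+}$ is the quadratic character of $G_{F^+}$ attached to $F/F^+$. For an infinite place $v$ of $F^+$, $c_v\in G_{F^+}$ denotes a complex conjugation associated to $v$. For continuous $r:G_F\to\operatorname{GL}_n(\overline{\mathbb{Q}}_\ell)$ and $\mu:G_{F^+}\to\overline{\mathbb{Q}}_\ell^\times$, the pair $(r,\mu)$ is polarized if for some (equivalently every) infinite place $v$ of $F^+$ there are $\epsilon_v\in\{\pm1\}$ and a non-degenerate pairing $\langle\ ,\ \rangle_v$ on $\overline{\mathbb{Q}}_\ell^n$ with $\langle x,y\rangle_v=\epsilon_v\langle y,x\rangle_v$ and $\langle r(g)x,r(c_vgc_v)y\rangle_v=\mu(g)\langle x,y\rangle_v$ for all $x,y$ and $g\in G_F$, and moreover (after replacing $\mu$ by $\mu\delta_{F/F^+}$ if necessary) $\epsilon_v=-\mu(c_v)$ for all $v$. $r$ is polarizable if such a $\mu$ exists. A polarized $(r,\mu)$ is totally odd if $\epsilon_v=1$ for all $v\mid\infty$; a polarizable irreducible $r$ is called totally odd if it is totally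 odd with respect to its polarization. If $(r,\mu)$ and $(s,\chi)$ are polarized then $(r\otimes s,\mu\chi\delta_{F/F^+})$ is polarized; this is the polarization used for $\rho\otimes\sigma$. *)

From HB Require Import structures.
From mathcomp Require Import all_boot all_order all_algebra all_field.
From mathcomp Require Import mxtens.
From Stdlib Require Import ClassicalEpsilon.
Set Implicit Arguments. Unset Strict Implicit. Unset Printing Implicit Defensive.
Import Order.TTheory GRing.Theory Num.Theory.
Local Open Scope ring_scope.

(* Qbar is modelled by algC; elements of absolute Galois groups are field
   automorphisms of algC (functions algC -> algC). Subfields of algC are
   predicates algC -> Prop. *)

Definition is_aut (g : algC -> algC) : Prop :=
  [/\ forall x y, g (x + y) = g x + g y,
      forall x y, g (x * y) = g x * g y,
      g 1 = 1 & bijective g].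

Definition is_embedding (F : algC -> Prop) (e : algC -> algC) : Prop :=
  [/\ forall x y, F x -> F y -> e (x + y) = e x + e y,
      forall x y, F x -> F y -> e (x * y) = e x * e y &
      e 1 = 1].

Definition is_subfield (F : algC -> Prop) : Prop :=
  [/\ F 0, F 1, forall x y, F x -> F y -> F (x - y),
      forall x y, F x -> F y -> F (x * y) &
      forall x, F x -> F x^-1].

Definition is_number_field (F : algC -> Prop) : Prop :=
  is_subfield F /\
  exists s : seq algC, forall x, F x ->
    exists c : seq rat, x = \sum_(i < size s) ratr (nth 0 c i) * s`_i.

Definition totally_real (F : algC -> Prop) : Prop :=
  forall e, is_embedding F e -> forall x, F x -> e x \is Num.real.

Definition totally_imaginary (F : algC -> Prop) : Prop :=
  forall e, is_embedding F e -> exists2 x, F x & e x \isn't Num.real.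

Definition quadratic_ext (F Fp : algC -> Prop) : Prop :=
  (forall x, Fp x -> F x) /\
  exists a, [/\ F a, ~ Fp a &
    forall x, F x -> exists b c, [/\ Fp b, Fp c & x = b + c * a]].

Definition CM_pair (F Fp : algC -> Prop) : Prop :=
  [/\ is_number_field Fp, is_subfield F, totally_real Fp,
      totally_imaginary F & quadratic_ext F Fp].

Definition in_Gal (F : algC -> Prop) (g : algC -> algC) : Prop :=
  is_aut g /\ forall x, F x -> g x = x.

(* complex conjugations: the G_Q-conjugates g^{-1} o conj o g of the
   complex conjugation of algC; those are exactly the complex conjugations
   c_v attached to the infinite places v of a totally real field. *)
Definition complex_conj (c : algC -> algC) : Prop :=
  exists2 g, is_aut g & forall x, g (c x) = (g x)^*.

Definition deltaF (K : fieldType) (F : algC -> Prop) (g : algC -> algC) : K :=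
  if excluded_middle_informative (in_Gal F g) then 1 else -1.

(* continuous-ness dropped *)
Definition is_rep (K : fieldType) (n : nat) (F : algC -> Prop)
    (r : (algC -> algC) -> 'M[K]_n) : Prop :=
  forall g h, in_Gal F g -> in_Gal F h ->
    r g \in unitmx /\ r (g \o h) = r g *m r h.

Definition is_character (K : fieldType) (Fp : algC -> Prop)
    (mu : (algC -> algC) -> K) : Prop :=
  forall g h, in_Gal Fp g -> in_Gal Fp h ->
    mu g != 0 /\ mu (g \o h) = mu g * mu h.

(* irreducible, with the mathcomp convention (row vectors, right action) *)
Definition irreducible_rep (K : fieldType) (n : nat) (F : algC -> Prop)
    (r : (algC -> algC) -> 'M[K]_n) : Prop :=
  (0 < n)%N /\
  forall U : 'M[K]_n, (forall g, in_Gal F g -> (U *m r g <= U)%MS) ->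
    U = 0 \/ row_full U.

Definition polarization_at (K : fieldType) (n : nat) (F : algC -> Prop)
    (r : (algC -> algC) -> 'M[K]_n) (mu : (algC -> algC) -> K)
    (c : algC -> algC) (eps : K) (P : 'M[K]_n) : Prop :=
  [/\ P \in unitmx, P^T = eps *: P &
      forall g, in_Gal F g -> (r g)^T *m P *m r (c \o g \o c) = mu g *: P].

Definition polarized (K : fieldType) (n : nat) (F Fp : algC -> Prop)
    (r : (algC -> algC) -> 'M[K]_n) (mu : (algC -> algC) -> K) : Prop :=
  is_character Fp mu /\
  forall c, complex_conj c -> exists eps, exists P,
    [/\ eps = 1 \/ eps = -1, polarization_at F r mu c eps P & eps = - mu c].

Definition totally_odd (K : fieldType) (n : nat) (F Fp : algC -> Prop)
    (r : (algC -> algC) -> 'M[K]_n) (mu : (algC -> algC) -> K) : Prop :=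
  polarized F Fp r mu /\
  forall c, complex_conj c -> exists P, polarization_at F r mu c 1 P.

Definition tens_rep (K : fieldType) (n m : nat)
    (r : (algC -> algC) -> 'M[K]_n) (s : (algC -> algC) -> 'M[K]_m) :
    (algC -> algC) -> 'M[K]_(n * m) :=
  fun g => r g *t s g.

Definition tens_char (K : fieldType) (F : algC -> Prop)
    (mu chi : (algC -> algC) -> K) : (algC -> algC) -> K :=
  fun g => mu g * chi g * deltaF K F g.

From HB Require Import structures.
From mathcomp Require Import all_boot all_order all_algebra all_field.
From mathcomp Require Import mxtens.
From mathcomp Require Import ring.
From Stdlib Require Import ClassicalEpsilon.
Set Implicit Arguments. Unset Strict Implicit. Unset Printing Implicit Defensive.
Import Order.TTheory GRing.Theory Num.Theory.
Local Open Scope ring_scope.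

(* By Schur's lemma a polarization form of an irreducible representation is
   unique up to a scalar, so its sign eps_v is determined by the pair (r, mu);
   since eps_v = - mu(c_v), total oddness of (r, mu) just says mu(c_v) = -1 for
   every complex conjugation. As delta_{F/F+}(c_v) = -1, the polarization
   mu chi delta of a tensor product takes the value - mu(c_v) chi(c_v) there,
   and of the three conditions mu(c_v) = -1, chi(c_v) = -1, mu(c_v) chi(c_v) = 1
   any two imply the third. In odd dimension eps_v = -1 is impossible because
   a skew-symmetric matrix of odd size is singular. *)

Lemma aut_sub (g : algC -> algC) : is_aut g -> forall x y, g (x - y) = g x - g y.
Proof. by move=> [gD _ _ _] x y; apply: (addIr (g y)); rewrite -gD !subrK. Qed.

Lemma in_Gal_comp (F : algC -> Prop) g h :
  in_Gal F g -> in_Gal F h -> in_Gal F (g \o h).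
Proof.
move=> [[gD gM g1 gb] gF] [[hD hM h1 hb] hF].
split=> [|x Fx /=]; last by rewrite hF ?gF.
split=> [x y|x y||] /=; rewrite ?hD ?gD ?hM ?gM ?h1 ?g1 //.
exact: bij_comp.
Qed.

Lemma subfield_half (S : algC -> Prop) x : is_subfield S -> S x -> S (x / 2).
Proof.
move=> [S0 S1 SB SM SV] Sx; apply: SM => //; apply: SV.
have -> : (2 : algC) = 1 - (0 - 1) by ring.
by apply: (SB) => //; apply: SB.
Qed.

Lemma deltaF_Gal (K : fieldType) F g : in_Gal F g -> deltaF K F g = 1.
Proof. by rewrite /deltaF; case: excluded_middle_informative. Qed.

Lemma deltaF_notin_Gal (K : fieldType) F g : ~ in_Gal F g -> deltaF K F g = -1.
Proof. by rewrite /deltaF; case: excluded_middle_informative. Qed.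

Lemma deltaF_neq0 (K : fieldType) F g : deltaF K F g != 0.
Proof.
by rewrite /deltaF; case: excluded_middle_informative => ?; rewrite ?oppr_eq0 oner_neq0.
Qed.

Lemma unitmx_neq0 (K : fieldType) n (P : 'M[K]_n) : (0 < n)%N -> P \in unitmx -> P != 0.
Proof.
case: n P => // n P _; apply: contraTneq => ->.
by rewrite unitmxE det0 unitr0.
Qed.

Lemma tensmxZ (K : comPzRingType) m n p q a b (A : 'M[K]_(m, n)) (B : 'M[K]_(p, q)) :
  (a *: A) *t (b *: B) = (a * b) *: (A *t B).
Proof. by apply/matrixP => i j; rewrite !mxE mulrACA. Qed.

Lemma det_skew_odd (K : fieldType) n (P : 'M[K]_n) :
  2 != 0 :> K -> odd n -> P^T = - P -> \det P = 0.
Proof.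
move=> two_neq0 odd_n skewP.
have : \det P = - \det P.
  by rewrite -{1}det_tr skewP -scaleN1r detZ -signr_odd odd_n expr1 mulN1r.
move/eqP; rewrite -subr_eq0 opprK -mulr2n -mulr_natr mulf_eq0.
by rewrite (negbTE two_neq0) orbF => /eqP.
Qed.

Lemma schur_scalar (K : closedFieldType) F n (r : (algC -> algC) -> 'M[K]_n)
    (N : 'M[K]_n) :
  irreducible_rep F r -> (forall g, in_Gal F g -> N *m r g = r g *m N) ->
  exists l, N = l%:M.
Proof.
move=> [n_gt0 irr] N_comm.
have : size (char_poly N) != 1%N by rewrite size_char_poly; case: n n_gt0 {r irr N_comm N}.
case/closed_rootP => l; rewrite -eigenvalue_root_char => eig_l; exists l.
have [g Gg||] := irr (kermx (N - l%:M)).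
- rewrite sub_kermx -mulmxA mulmxBr -N_comm // scalar_mxC -mulmxBl.
  by rewrite mulmxA mulmx_ker mul0mx.
- by move=> ker0; move: eig_l; rewrite /eigenvalue /eigenspace ker0 eqxx.
- by rewrite -sub1mx sub_kermx mul1mx subr_eq0 => /eqP.
Qed.

(* The invariance of P gives B = mu P^-1 A^-1 P; substituting this into the
   invariance of Q says that A commutes with Q P^-1. *)
Lemma invariant_forms_ratio_comm (K : fieldType) n (A B P Q : 'M[K]_n) (mu : K) :
  A \in unitmx -> P \in unitmx -> mu != 0 ->
  A *m P *m B = mu *: P -> A *m Q *m B = mu *: Q ->
  A *m (Q *m invmx P) = (Q *m invmx P) *m A.
Proof.
move=> uA uP mu_neq0 invP invQ.
have B_def : B = mu *: (invmx P *m invmx A *m P).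
  have -> : B = invmx P *m invmx A *m (A *m P *m B).
    by rewrite !mulmxA mulmxKV // mulVmx // mul1mx.
  by rewrite invP scalemxAr.
move: invQ; rewrite B_def -scalemxAr => /(scalerI mu_neq0) invQ.
have conjA : A *m (Q *m invmx P) *m invmx A = Q *m invmx P.
  by rewrite -[in RHS]invQ !mulmxA mulmxK.
by rewrite -{2}conjA mulmxKV.
Qed.

Lemma polarization_form_unique (K : closedFieldType) F n
    (r : (algC -> algC) -> 'M[K]_n) mu c e1 e2 P Q :
  is_rep F r -> irreducible_rep F r -> (forall g, in_Gal F g -> mu g != 0) ->
  polarization_at F r mu c e1 P -> polarization_at F r mu c e2 Q ->
  exists l, Q = l *: P.
Proof.
move=> rep irr mu_neq0 [uP _ invP] [_ _ invQ].
have [l ratio_l] : exists l, (Q *m invmx P)^T = l%:M.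
  apply: (schur_scalar irr) => g Gg.
  have urg : (r g)^T \in unitmx by rewrite unitmx_tr (rep g g Gg Gg).1.
  have := invariant_forms_ratio_comm urg uP (mu_neq0 g Gg) (invP g Gg) (invQ g Gg).
  by move/(congr1 trmx); rewrite !trmx_mul trmxK.
exists l; rewrite -[Q](mulmxKV uP) -[Q *m _]trmxK ratio_l tr_scalar_mx.
exact: mul_scalar_mx.
Qed.

Lemma polarization_sign_unique (K : closedFieldType) F n
    (r : (algC -> algC) -> 'M[K]_n) mu c e1 e2 P Q :
  is_rep F r -> irreducible_rep F r -> (forall g, in_Gal F g -> mu g != 0) ->
  polarization_at F r mu c e1 P -> polarization_at F r mu c e2 Q -> e1 = e2.
Proof.
move=> rep irr mu_neq0 polP polQ.
have [l Q_def] := polarization_form_unique rep irr mu_neq0 polP polQ.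
case: polP polQ => uP trP _ [uQ trQ _].
have P_neq0 := unitmx_neq0 irr.1 uP.
have l_neq0 : l != 0.
  by apply: contraTneq (unitmx_neq0 irr.1 uQ) => l0; rewrite Q_def l0 scale0r eqxx.
move: trQ; rewrite Q_def linearZ /= trP !scalerA => /eqP.
rewrite -subr_eq0 -scalerBl scalemx_eq0 (negbTE P_neq0) orbF subr_eq0 mulrC.
by move=> /eqP; apply: mulIf.
Qed.

Lemma totally_odd_odd_dim (K : fieldType) F Fp n (r : (algC -> algC) -> 'M[K]_n) mu :
  2 != 0 :> K -> odd n -> polarized F Fp r mu -> totally_odd F Fp r mu.
Proof.
move=> two_neq0 odd_n pol; split=> // c cc.
have [e [P [[->|->] polP _]]] := pol.2 c cc; first by exists P.
case: polP => + trP _; rewrite scaleN1r in trP.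
by rewrite unitmxE (det_skew_odd two_neq0 odd_n trP) unitr0.
Qed.

Lemma is_rep_tens (K : fieldType) F n m
    (r : (algC -> algC) -> 'M[K]_n) (s : (algC -> algC) -> 'M[K]_m) :
  (0 < n)%N -> (0 < m)%N -> is_rep F r -> is_rep F s -> is_rep F (tens_rep r s).
Proof.
move=> n_gt0 m_gt0 rep_r rep_s g h Gg Gh.
have [ur r_gh] := rep_r g h Gg Gh; have [us s_gh] := rep_s g h Gg Gh.
split; first by apply: tensmx_unit; rewrite -?lt0n.
by rewrite /tens_rep r_gh s_gh tensmx_mul.
Qed.

Lemma polarization_at_tens (K : fieldType) F n m
    (r : (algC -> algC) -> 'M[K]_n) (s : (algC -> algC) -> 'M[K]_m)
    mu chi c e1 e2 P1 P2 :
  (0 < n)%N -> (0 < m)%N ->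
  polarization_at F r mu c e1 P1 -> polarization_at F s chi c e2 P2 ->
  polarization_at F (tens_rep r s) (tens_char F mu chi) c (e1 * e2) (P1 *t P2).
Proof.
move=> n_gt0 m_gt0 [u1 tr1 inv1] [u2 tr2 inv2]; split.
- by apply: tensmx_unit; rewrite -?lt0n.
- by rewrite trmx_tens tr1 tr2 tensmxZ.
- move=> g Gg; rewrite /tens_rep /tens_char trmx_tens !tensmx_mul inv1 // inv2 //.
  by rewrite tensmxZ deltaF_Gal // mulr1.
Qed.

Section CMField.

Variables F Fp : algC -> Prop.
Hypothesis hCM : CM_pair F Fp.

Lemma CM_sub x : Fp x -> F x.
Proof. by case: hCM => _ _ _ _ [sub _]; apply: sub. Qed.

Lemma in_Gal_CM g : in_Gal F g -> in_Gal Fp g.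
Proof. by move=> [ga gF]; split=> // x /CM_sub; apply: gF. Qed.

Lemma complex_conj_notin_Gal c : complex_conj c -> ~ in_Gal F c.
Proof.
case=> g [gD gM g1 _] g_conj [_ cF]; case: hCM => _ _ _ imag _.
have [x Fx] : exists2 x, F x & g x \isn't Num.real by apply: imag; split.
by rewrite CrealE -g_conj cF // eqxx.
Qed.

Lemma deltaF_conj (K : fieldType) c : complex_conj c -> deltaF K F c = -1.
Proof. by move/complex_conj_notin_Gal; apply: deltaF_notin_Gal. Qed.

Section Generator.

Variables a b0 c0 : algC.
Hypotheses (Fa : F a) (nFpa : ~ Fp a) (Fpb0 : Fp b0) (Fpc0 : Fp c0).
Hypothesis a_root : a * a = b0 + c0 * a.
Hypothesis F_span : forall x, F x -> exists b c, [/\ Fp b, Fp c & x = b + c * a].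

Lemma Gal_generator g : in_Gal Fp g -> g a = a \/ g a = c0 - a.
Proof.
move=> [[gD gM _ _] gFp].
have ga_root : g a * g a = b0 + c0 * g a by rewrite -gM a_root gD gM (gFp b0) ?(gFp c0).
have : (g a - a) * (g a - (c0 - a)) = 0.
  transitivity ((g a * g a - c0 * g a) - (a * a - c0 * a)); first by ring.
  by rewrite ga_root a_root !addrK subrr.
by move/eqP; rewrite mulf_eq0 !subr_eq0 => /orP[] /eqP; [left | right].
Qed.

Lemma generator_conj_neq : c0 - a <> a.
Proof.
move=> conj_a; apply: nFpa.
have -> : a = c0 / 2 by rewrite -[c0](subrK a) conj_a; field.
by apply: subfield_half => //; case: hCM => [[]].
Qed.

Lemma in_Gal_fix_generator g : in_Gal Fp g -> in_Gal F g <-> g a = a.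
Proof.
move=> [g_aut gFp]; split=> [[_ gF] | ga]; first exact: gF.
split=> // x /F_span [b [c [Fpb Fpc ->]]].
by case: g_aut => gD gM _ _; rewrite gD gM ga !gFp.
Qed.

Lemma in_Gal_comp_generator g h : in_Gal Fp g -> in_Gal Fp h ->
  in_Gal F (g \o h) <-> (in_Gal F g <-> in_Gal F h).
Proof.
move=> Gg Gh; rewrite !in_Gal_fix_generator //=; last exact: in_Gal_comp.
have g_conj : g (c0 - a) = c0 - g a by case: Gg => ga gFp; rewrite aut_sub // gFp.
have := generator_conj_neq.
case: (Gal_generator Gh) => ->; first by tauto.
rewrite g_conj; case: (Gal_generator Gg) => ->; first by tauto.
by rewrite opprB addrCA subrr addr0; tauto.
Qed.

End Generator.

Lemma in_Gal_compE g h : in_Gal Fp g -> in_Gal Fp h ->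
  in_Gal F (g \o h) <-> (in_Gal F g <-> in_Gal F h).
Proof.
case: hCM => _ [_ _ _ FM _] _ _ [_ [a [Fa nFpa F_span]]].
have [b0 [c0 [Fpb0 Fpc0 a_root]]] := F_span _ (FM _ _ Fa Fa).
exact: (in_Gal_comp_generator Fa nFpa Fpb0 Fpc0 a_root F_span).
Qed.

Lemma deltaF_mul (K : fieldType) g h : in_Gal Fp g -> in_Gal Fp h ->
  deltaF K F (g \o h) = deltaF K F g * deltaF K F h.
Proof.
move=> Gg Gh; have gh_iff := in_Gal_compE Gg Gh.
case: (excluded_middle_informative (in_Gal F g)) => Fg;
  case: (excluded_middle_informative (in_Gal F h)) => Fh.
- by rewrite !deltaF_Gal ?mulr1 //; tauto.
- by rewrite (deltaF_Gal _ Fg) !deltaF_notin_Gal ?mul1r //; tauto.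
- by rewrite (deltaF_Gal _ Fh) !deltaF_notin_Gal ?mulr1 //; tauto.
- by rewrite deltaF_Gal ?deltaF_notin_Gal ?mulrNN ?mulr1 //; tauto.
Qed.

Lemma tens_char_conj (K : fieldType) (mu chi : (algC -> algC) -> K) c :
  complex_conj c -> tens_char F mu chi c = - (mu c * chi c).
Proof. by move=> cc; rewrite /tens_char deltaF_conj // mulrN1. Qed.

Lemma is_character_tens (K : fieldType) (mu chi : (algC -> algC) -> K) :
  is_character Fp mu -> is_character Fp chi -> is_character Fp (tens_char F mu chi).
Proof.
move=> char_mu char_chi g h Gg Gh.
have [mu_g mu_gh] := char_mu g h Gg Gh; have [chi_g chi_gh] := char_chi g h Gg Gh.
rewrite /tens_char mu_gh chi_gh deltaF_mul // !mulf_neq0 ?deltaF_neq0 //.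
by split=> //; ring.
Qed.

Lemma polarized_tens (K : fieldType) n m
    (r : (algC -> algC) -> 'M[K]_n) (s : (algC -> algC) -> 'M[K]_m) mu chi :
  (0 < n)%N -> (0 < m)%N -> polarized F Fp r mu -> polarized F Fp s chi ->
  polarized F Fp (tens_rep r s) (tens_char F mu chi).
Proof.
move=> n_gt0 m_gt0 [char_mu pol_r] [char_chi pol_s].
split=> [|c cc]; first exact: is_character_tens.
have [e1 [P1 [e1_sign pol1 e1_mu]]] := pol_r c cc.
have [e2 [P2 [e2_sign pol2 e2_chi]]] := pol_s c cc.
exists (e1 * e2), (P1 *t P2); split; last 1 first.
- by rewrite tens_char_conj // e1_mu e2_chi mulrNN opprK.
- by case: e1_sign e2_sign => -> [] ->; rewrite ?mulrNN ?mulr1 ?mul1r; auto.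
- exact: polarization_at_tens.
Qed.

Lemma totally_oddE (K : closedFieldType) n (r : (algC -> algC) -> 'M[K]_n) mu :
  is_rep F r -> irreducible_rep F r -> polarized F Fp r mu ->
  totally_odd F Fp r mu <-> forall c, complex_conj c -> mu c = -1.
Proof.
move=> rep irr pol.
have mu_neq0 g : in_Gal F g -> mu g != 0.
  by move/in_Gal_CM => Gg; have [] := pol.1 g g Gg Gg.
split=> [[_ odd] c cc | mu_conj]; last first.
  split=> // c cc; have [e [P [_ polP e_mu]]] := pol.2 c cc.
  by exists P; rewrite -[1]opprK -(mu_conj c cc) -e_mu.
have [e [P [_ polP e_mu]]] := pol.2 c cc; have [Q polQ] := odd c cc.
have e1 := polarization_sign_unique rep irr mu_neq0 polP polQ.
by rewrite -[mu c]opprK -e_mu e1.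
Qed.

Lemma totally_odd_tensE (K : closedFieldType) n m
    (r : (algC -> algC) -> 'M[K]_n) (s : (algC -> algC) -> 'M[K]_m) mu chi :
  is_rep F r -> is_rep F s -> irreducible_rep F (tens_rep r s) ->
  (0 < n)%N -> (0 < m)%N -> polarized F Fp r mu -> polarized F Fp s chi ->
  totally_odd F Fp (tens_rep r s) (tens_char F mu chi) <->
  forall c, complex_conj c -> mu c * chi c = 1.
Proof.
move=> rep_r rep_s irr n_gt0 m_gt0 pol_r pol_s.
have rep_tens := is_rep_tens n_gt0 m_gt0 rep_r rep_s.
rewrite (totally_oddE rep_tens irr (polarized_tens n_gt0 m_gt0 pol_r pol_s)).
split=> odd c cc; last by rewrite tens_char_conj ?odd.
by apply/oppr_inj; rewrite -tens_char_conj ?odd.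
Qed.

End CMField.

Lemma sign_two_of_three (R : pzRingType) (a b : R) :
  (a = -1 /\ b = -1) \/ (a = -1 /\ a * b = 1) \/ (b = -1 /\ a * b = 1) ->
  [/\ a = -1, b = -1 & a * b = 1].
Proof.
case=> [[-> ->] | [[-> ab1] | [-> ab1]]]; split; rewrite ?mulrNN ?mulr1 //.
- by move/eqP: ab1; rewrite mulN1r eqr_oppLR => /eqP.
- by move/eqP: ab1; rewrite mulrN1 eqr_oppLR => /eqP.
Qed.

Theorem lemma2p9 (K : closedFieldType) (char0 : [pchar K] =i pred0)
  (F Fp : algC -> Prop) (hCM : CM_pair F Fp)
  (n m : nat)
  (rho : (algC -> algC) -> 'M[K]_n) (sigma : (algC -> algC) -> 'M[K]_m)
  (mu chi : (algC -> algC) -> K)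
  (hrho : is_rep F rho) (hsigma : is_rep F sigma)
  (irho : irreducible_rep F rho) (isigma : irreducible_rep F sigma)
  (prho : polarized F Fp rho mu) (psigma : polarized F Fp sigma chi) :
  (odd n -> totally_odd F Fp rho mu) /\
  (irreducible_rep F (tens_rep rho sigma) ->
   let P1 := totally_odd F Fp rho mu in
   let P2 := totally_odd F Fp sigma chi in
   let P3 := totally_odd F Fp (tens_rep rho sigma) (tens_char F mu chi) in
   (P1 /\ P2) \/ (P1 /\ P3) \/ (P2 /\ P3) -> [/\ P1, P2 & P3]).
Proof.
split=> [odd_n | irr_tens P1 P2 P3 two_odd].
  by apply: totally_odd_odd_dim odd_n prho; move/pcharf0P: char0 => ->.
have E1 := totally_oddE hCM hrho irho prho.
have E2 := totally_oddE hCM hsigma isigma psigma.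
have E3 := totally_odd_tensE hCM hrho hsigma irr_tens irho.1 isigma.1 prho psigma.
have signs c : complex_conj c -> [/\ mu c = -1, chi c = -1 & mu c * chi c = 1].
  move=> cc; apply: sign_two_of_three.
  case: two_odd => [[/E1 odd1 /E2 odd2] | [[/E1 odd1 /E3 odd3] | [/E2 odd2 /E3 odd3]]];
    [left | right; left | right; right]; split; auto.
by split; [apply/E1 | apply/E2 | apply/E3] => c /signs[].
Qed.
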